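(* Let $\mathcal{X}=\{(\mathbf{x}^{(1,m)},\ldots,\mathbf{x}^{(N,m)})\in(\mathbb{R}^D)^N\}_{m=1}^M$ and let $\bar{\mathcal{K}}\subseteq[N]$ have even size. Then there exists a complete undirected weighted graph with vertex set $\bar{\mathcal{K}}$ and edge weights $w$ such that for every $\mathcal{K}\subset\bar{\mathcal{K}}$, the weight of the cut induced by $\mathcal{K}$, namely $\sum_{n\in\mathcal{K},\,n'\in\bar{\mathcal{K}}\setminus\mathcal{K}}w(\{n,n'\})$, equals $\frac12\big[\mathrm{SE}(\mathcal{X};\mathcal{K})+\mathrm{SE}(\mathcal{X};\bar{\mathcal{K}}\setminus\mathcal{K})\big]$ up to an additive constant independent of $\mathcal{K}$. In particular, the problem $\min_{\mathcal{K}\subset\bar{\mathcal{K}},\,|\mathcal{K}|=|\bar{\mathcal{K}}|/2}\frac12\big[\mathrm{SE}(\mathcal{X};\mathcal{K})+\mathrm{SE}(\mathcal{X};\bar{\mathcal{K}}\setminus\mathcal{K})\big]$ is a minimum balanced cut problem on this complete graph with $|\bar{\mathcal{K}}|$ vertices.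
   Context: $[N]=\{1,\ldots,N\}$. For the instance set $\mathcal{X}$, let $\mu^{(n)}=\frac1M\sum_m\mathbf{x}^{(n,m)}$, $\Sigma^{(n)}=\frac1M\sum_m(\mathbf{x}^{(n,m)}-\mu^{(n)})\otimes(\mathbf{x}^{(n,m)}-\mu^{(n)})$ and $\Sigma^{(n,n')}=\frac1M\sum_m(\mathbf{x}^{(n,m)}-\mu^{(n)})\otimes(\mathbf{x}^{(n',m)}-\mu^{(n')})$. The multivariate Pearson correlation of features $n,n'$ is $p_{n,n'}:=\mathrm{tr}(\Sigma^{(n,n')})/\mathrm{tr}\big((\Sigma^{(n)}\Sigma^{(n')})^{1/2}\big)$. For $\mathcal{K}\subseteq[N]$ the surrogate entanglement is $\mathrm{SE}(\mathcal{X};\mathcal{K}):=\sum_{n\in\mathcal{K},\,n'\in[N]\setminus\mathcal{K}}p_{n,n'}$. *)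

From HB Require Import structures.
From mathcomp Require Import all_boot all_order all_algebra.
From mathcomp Require Import boolp classical_sets reals.
Set Implicit Arguments. Unset Strict Implicit. Unset Printing Implicit Defensive.
Import Order.TTheory GRing.Theory Num.Theory.
Local Open Scope ring_scope.

Section SE.
Variable R : realType.

Definition is_nonneg_sqrt (D : nat) (A S : 'M[R]_D) : Prop :=
  S *m S = A /\
  exists c : 'I_D -> R, (forall i, 0 <= c i) /\
    char_poly S = \prod_(i < D) ('X - (c i)%:P).

(* the (principal) matrix square root A^{1/2}; for A = Sigma Sigma' with
   Sigma, Sigma' PSD such a root exists and its trace is uniquely determined
   (sum of the square roots of the eigenvalues of A). *)
Definition msqrt (D : nat) (A : 'M[R]_D) : 'M[R]_D :=
  xget 0 [set S | is_nonneg_sqrt A S].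

(* dataset: M instances, each with N features in R^D (column vectors) *)
Definition feat_mean (D N M : nat) (X : 'I_M -> 'I_N -> 'cV[R]_D) (n : 'I_N)
  : 'cV[R]_D := (M%:R)^-1 *: \sum_(m < M) X m n.

Definition cross_cov (D N M : nat) (X : 'I_M -> 'I_N -> 'cV[R]_D)
  (n n' : 'I_N) : 'M[R]_D :=
  (M%:R)^-1 *: \sum_(m < M)
     ((X m n - feat_mean X n) *m (X m n' - feat_mean X n')^T).

Definition cov (D N M : nat) (X : 'I_M -> 'I_N -> 'cV[R]_D) (n : 'I_N)
  : 'M[R]_D := cross_cov X n n.

Definition pearson (D N M : nat) (X : 'I_M -> 'I_N -> 'cV[R]_D)
  (n n' : 'I_N) : R :=
  \tr (cross_cov X n n') / \tr (msqrt (cov X n *m cov X n')).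

Definition SE (D N M : nat) (X : 'I_M -> 'I_N -> 'cV[R]_D)
  (K : {set 'I_N}) : R :=
  \sum_(n in K) \sum_(n' in ~: K) pearson X n n'.

Definition cut_weight (N : nat) (w : 'I_N -> 'I_N -> R)
  (Kbar K : {set 'I_N}) : R :=
  \sum_(n in K) \sum_(n' in Kbar :\: K) w n n'.

Definition SE_obj (D N M : nat) (X : 'I_M -> 'I_N -> 'cV[R]_D)
  (Kbar K : {set 'I_N}) : R :=
  (SE X K + SE X (Kbar :\: K)) / 2.

End SE.

From HB Require Import structures.
From mathcomp Require Import all_boot all_order all_algebra.
From mathcomp Require Import boolp classical_sets reals.
Set Implicit Arguments. Unset Strict Implicit. Unset Printing Implicit Defensive.
Import Order.TTheory GRing.Theory Num.Theory.
Local Open Scope ring_scope.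

(* For K inside Kbar, SE(K) + SE(Kbar \ K) counts every pair (n, n') split by
   the cut in both orders, plus every pair leaving Kbar, each exactly once.
   The latter total does not depend on K, so the symmetrized Pearson
   correlations (p_{n,n'} + p_{n',n}) / 2 are edge weights whose cut weight is
   the objective minus a constant; in particular both rank balanced cuts
   identically. *)

Section CrossSum.
Variables (T : finType) (R : nmodType).
Implicit Types (p : T -> T -> R) (A B C Kbar K : {set T}).

Definition cross_sum p A B : R := \sum_(n in A) \sum_(n' in B) p n n'.

Lemma cross_sumIDl p A B C :
  cross_sum p A B = cross_sum p (A :&: C) B + cross_sum p (A :\: C) B.
Proof. exact: big_setID. Qed.

Lemma cross_sumIDr p A B C :
  cross_sum p A B = cross_sum p A (B :&: C) + cross_sum p A (B :\: C).
Proof.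
by rewrite /cross_sum -big_split; apply: eq_bigr => n _; apply: big_setID.
Qed.

Lemma cross_sum_compl_diff p Kbar K : K \subset Kbar ->
  cross_sum p K (~: K) + cross_sum p (Kbar :\: K) (~: (Kbar :\: K)) =
  cross_sum p K (Kbar :\: K) + cross_sum p (Kbar :\: K) K
  + cross_sum p Kbar (~: Kbar).
Proof.
move=> /fintype.subsetP sK.
rewrite (cross_sumIDr _ K (~: K) Kbar) (cross_sumIDr _ (Kbar :\: K) _ Kbar).
rewrite [cross_sum _ Kbar _](cross_sumIDl _ _ _ K).
have -> : ~: K :&: Kbar = Kbar :\: K by rewrite finset.setIC finset.setDE.
have -> : ~: K :\: Kbar = ~: Kbar.
  apply/setP => x; rewrite !inE.
  by case: (boolP (x \in K)) => [/sK -> // | _]; rewrite andbT.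
have -> : ~: (Kbar :\: K) :&: Kbar = K.
  apply/setP => x; rewrite !inE.
  by case: (boolP (x \in K)) => [/sK -> // | _]; rewrite andNb.
have -> : ~: (Kbar :\: K) :\: Kbar = ~: Kbar.
  by apply/setP => x; rewrite !inE; case: (x \in Kbar); rewrite ?andbF.
have -> : Kbar :&: K = K by apply/finset.setIidPr/fintype.subsetP.
exact: addrACA.
Qed.

End CrossSum.

Section SymmetrizedPearson.
Variables (R : realType) (D N M : nat) (X : 'I_M -> 'I_N -> 'cV[R]_D).

Definition sym_pearson (n n' : 'I_N) : R :=
  (pearson X n n' + pearson X n' n) / 2.

Lemma sym_pearsonC n n' : sym_pearson n n' = sym_pearson n' n.
Proof. by rewrite /sym_pearson [in LHS]addrC. Qed.

Lemma cut_weight_sym_pearson (Kbar K : {set 'I_N}) : K \subset Kbar ->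
  cut_weight sym_pearson Kbar K =
  SE_obj X Kbar K - cross_sum (pearson X) Kbar (~: Kbar) / 2.
Proof.
move=> sK; rewrite /SE_obj /SE.
rewrite -!/(cross_sum (pearson X) _ _) cross_sum_compl_diff //.
have -> : cut_weight sym_pearson Kbar K =
    (cross_sum (pearson X) K (Kbar :\: K)
     + cross_sum (pearson X) (Kbar :\: K) K) / 2.
  rewrite /cross_sum [X in (_ + X) / 2]exchange_big -big_split mulr_suml.
  by apply: eq_bigr => n _; rewrite -big_split mulr_suml.
by rewrite [in RHS]mulrDl addrK.
Qed.

End SymmetrizedPearson.

Theorem proposition2 (R : realType) (D N M : nat)
  (X : 'I_M -> 'I_N -> 'cV[R]_D) (Kbar : {set 'I_N}) :
  ~~ odd #|Kbar| ->
  exists (w : 'I_N -> 'I_N -> R) (c : R),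
    (forall n n', w n n' = w n' n) /\
    (forall K : {set 'I_N}, K \subset Kbar ->
       cut_weight w Kbar K = SE_obj X Kbar K + c) /\
    (forall K K' : {set 'I_N}, K \subset Kbar -> K' \subset Kbar ->
       #|K| = (#|Kbar| %/ 2)%N -> #|K'| = (#|Kbar| %/ 2)%N ->
       (cut_weight w Kbar K <= cut_weight w Kbar K')
         = (SE_obj X Kbar K <= SE_obj X Kbar K')).
Proof.
move=> _.
exists (sym_pearson X), (- (cross_sum (pearson X) Kbar (~: Kbar) / 2)).
split; first exact: sym_pearsonC.
split; first exact: cut_weight_sym_pearson.
move=> K K' sK sK' _ _.
by rewrite (cut_weight_sym_pearson X sK) (cut_weight_sym_pearson X sK') lerD2r.
Qed.
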